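(* Let $\xi$ be an $(I,T)$-system with the stuttering property, let $P(S)$ be a property, and let $n\ge 0$. Then there is no bad state that is reachable in $n+1$ transitions but not reachable in any number $k\le n$ of transitions if and only if $I(S_1)$ is redundant in $$\exists S_0\cdots\exists S_n\,[\,I(S_0)\wedge I(S_1)\wedge T_{0,1}\wedge\dots\wedge T_{n,n+1}\wedge \neg P(S_{n+1})\,],$$ i.e. if and only if this formula is equivalent, as a Boolean function of $S_{n+1}$, to $\exists S_0\cdots\exists S_n\,[\,I(S_0)\wedge T_{0,1}\wedge\dots\wedge T_{n,n+1}\wedge \neg P(S_{n+1})\,]$.
   Context: An $(I,T)$-system is a transition system over a finite set $S$ of Boolean state variables, given by a propositional formula $I(S)$ (initial states) and a propositional formula $T(S,S')$ (transition relation), where $S'$ is a copy of $S$. A state is a complete assignment to $S$. A trace $(s_0,\dots,s_k)$ is valid if $I(s_0)=1$ and $T(s_i,s_{i+1})=1$ for $i=0,\dots,k-1$; then $s_k$ is reachable in $k$ transitions. The system has the stuttering property if $T(s,s)=1$ for every state $s$. A property is a propositional formula $P(S)$; a state $s$ is bad if $P(s)=0$ and good if $P(s)=1$. Notation: $S_j$ is a copy of the state variables for time frame $j$; $T_{j,j+1}$ denotes $T(S_j,S_{j+1})$; $I(S_0)$, $I(S_1)$ are copies of $I$ over $S_0$, $S_1$; $P(S_{n+1})$ is a copy of $P$ over $S_{n+1}$. A conjunct $A$ is redundant in $\exists W[A\wedge B]$ if $\exists W[A\wedge B]\equiv\exists W[B]$, where $\equiv$ means equality as Boolean functions of the free variables.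 *)

From mathcomp Require Import all_boot.
Set Implicit Arguments. Unset Strict Implicit. Unset Printing Implicit Defensive.

(* Propositional formulas are represented by the Boolean
   functions they denote: I : state -> bool, T : state -> state -> bool,
   P : state -> bool. *)
Definition state (V : finType) := {ffun V -> bool}.

(* A trace is given by a function tr : nat -> state, of which only
   tr 0, ..., tr k matter. *)
Definition valid_trace (V : finType) (I : state V -> bool)
  (T : state V -> state V -> bool) (tr : nat -> state V) (k : nat) : Prop :=
  I (tr 0) /\ (forall i, i < k -> T (tr i) (tr i.+1)).

Definition reachable_in (V : finType) (I : state V -> bool)
  (T : state V -> state V -> bool) (k : nat) (s : state V) : Prop :=
  exists tr : nat -> state V, valid_trace I T tr k /\ tr k = s.

Definition stuttering (V : finType) (T : state V -> state V -> bool) : Prop :=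
  forall s, T s s.

(* Denotation, as a Boolean function of S_{n+1} = s, of
   exists S_0 .. S_n [ I(S_0) /\ T_{0,1} /\ ... /\ T_{n,n+1} /\ ~P(S_{n+1}) ] *)
Definition formula_without_I1 (V : finType) (I : state V -> bool)
  (T : state V -> state V -> bool) (P : state V -> bool) (n : nat)
  (s : state V) : Prop :=
  exists tr : nat -> state V, tr n.+1 = s /\
    I (tr 0) /\ (forall i, i < n.+1 -> T (tr i) (tr i.+1)) /\ ~~ P (tr n.+1).

(* Denotation of
   exists S_0 .. S_n [ I(S_0) /\ I(S_1) /\ T_{0,1} /\ ... /\ T_{n,n+1} /\ ~P(S_{n+1}) ] *)
Definition formula_with_I1 (V : finType) (I : state V -> bool)
  (T : state V -> state V -> bool) (P : state V -> bool) (n : nat)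
  (s : state V) : Prop :=
  exists tr : nat -> state V, tr n.+1 = s /\
    I (tr 0) /\ I (tr 1) /\ (forall i, i < n.+1 -> T (tr i) (tr i.+1)) /\
    ~~ P (tr n.+1).

Definition I1_redundant (V : finType) (I : state V -> bool)
  (T : state V -> state V -> bool) (P : state V -> bool) (n : nat) : Prop :=
  forall s : state V, formula_with_I1 I T P n s <-> formula_without_I1 I T P n s.

From mathcomp Require Import all_boot.
From Stdlib Require Import Classical_Prop.

Set Implicit Arguments.
Unset Strict Implicit.

(* Under stuttering, reachability in k steps implies reachability in any
   m >= k steps, so "reachable in at most n steps" is "reachable in n steps".
   The formula without I(S_1) describes the bad states reachable in n+1
   steps; the formula with I(S_1) the bad states reachable in n steps, since
   S_0 can be dropped (one direction) or taken equal to S_1 (the other,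
   by stuttering).  Redundancy of I(S_1) thus says exactly that every bad
   state reachable in n+1 steps is reachable in n steps. *)

Section Reachability.

Variables (V : finType) (I : state V -> bool) (T : state V -> state V -> bool).

Lemma reachable_in_le (k m : nat) (s : state V) :
  stuttering T -> k <= m -> reachable_in I T k s -> reachable_in I T m s.
Proof.
move=> stutT le_km [tr [[I0 Ttr] <-]].
exists (fun i => tr (minn i k)); split; last by rewrite (minn_idPr le_km).
split; first by rewrite min0n.
move=> i _ /=; case: (ltnP i k) => [lt_ik | le_ki].
  by rewrite (minn_idPl lt_ik); apply: Ttr.
by rewrite (minn_idPr (leqW le_ki)); apply: stutT.
Qed.

Variables (P : state V -> bool) (n : nat).

Lemma formula_without_I1E (s : state V) :
  formula_without_I1 I T P n s <-> ~~ P s /\ reachable_in I T n.+1 s.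
Proof.
split=> [[tr [<- [I0 [Ttr badP]]]] | [badP [tr [[I0 Ttr] tr_s]]]].
  by split=> //; exists tr.
by exists tr; rewrite tr_s.
Qed.

Lemma formula_with_I1E (s : state V) :
  stuttering T ->
  (formula_with_I1 I T P n s <-> ~~ P s /\ reachable_in I T n s).
Proof.
move=> stutT; split=> [[tr [<- [_ [I1 [Ttr badP]]]]] | [badP [tr [[I0 Ttr] tr_s]]]].
  split=> //; exists (fun i => tr i.+1); split=> //; split=> // i lt_in.
  exact: Ttr.
exists (fun i => tr i.-1); rewrite /= tr_s; do 4!split=> //.
by case=> [|i] lt_in /=; [apply: stutT | apply: Ttr].
Qed.

End Reachability.

Theorem proposition2 (V : finType) (I : state V -> bool)
  (T : state V -> state V -> bool) (P : state V -> bool) (n : nat) :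
  stuttering T ->
  ((~ exists s : state V, ~~ P s /\ reachable_in I T n.+1 s /\
        (forall k, k <= n -> ~ reachable_in I T k s))
   <-> I1_redundant I T P n).
Proof.
move=> stutT; split=> [no_new_bad s | redI1 [s [badP [reach_n1 unreach]]]].
- rewrite (formula_with_I1E I P n s stutT) formula_without_I1E.
  split=> -[badP reach]; split=> //.
    exact: reachable_in_le stutT (leqnSn n) reach.
  apply: NNPP => unreach_n; apply: no_new_bad; exists s; do 2!split=> //.
  by move=> k le_kn /(reachable_in_le stutT le_kn).
- have /redI1 : formula_without_I1 I T P n s by apply/formula_without_I1E.
  by case/(formula_with_I1E I P n s stutT) => _; apply: unreach.
Qed.
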